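(* For $\beta\in\{1,4\}$ write the large-$N$ expansion of the bulk-scaled structure function as $\tilde S_{N,\beta}(\tau)\sim \tilde S_{0,\infty,\beta}(\tau)+N^{-2}\tilde S_{1,\infty,\beta}(\tau)+N^{-4}\tilde S_{2,\infty,\beta}(\tau)+\cdots$. Then for all $\tau>0$ with $\tau\ne1$ (and additionally $\tau\ne2$ when $\beta=4$), $$\tilde S_{1,\infty,\beta}(\tau)=c_\beta\,\tau^2\frac{d^2}{d\tau^2}\tilde S_{0,\infty,\beta}(\tau),$$ $$\tilde S_{2,\infty,\beta}(\tau)=d_\beta\Big(\tau^4\frac{d^4}{d\tau^4}\tilde S_{0,\infty,\beta}(\tau)+8\tau^3\frac{d^3}{d\tau^3}\tilde S_{0,\infty,\beta}(\tau)+12\tau^2\frac{d^2}{d\tau^2}\tilde S_{0,\infty,\beta}(\tau)\Big),$$ with $c_1=-\frac16$, $c_4=-\frac1{24}$, $d_1=\frac7{360}$, $d_4=\frac7{5760}$.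
   Context: $\psi$ is the digamma function. The bulk-scaled structure functions are defined for real $\tau$ and $N>0$ by: $\tilde S_{N,1}(\tau)=2|\tau|-|\tau|\big(\psi(|\tau|N+\tfrac{N+1}2)-\psi(\tfrac{N+1}2)\big)$ for $|\tau|<1$, $\tilde S_{N,1}(\tau)=2-|\tau|\big(\psi(|\tau|N+\tfrac{N+1}2)-\psi(|\tau|N+\tfrac{1-N}2)\big)$ for $|\tau|\ge1$; $\tilde S_{N,4}(\tau)=\frac{|\tau|}2\big(1+\frac12(\psi(N+\frac12)-\psi(N-|\tau|N+\frac12))\big)$ for $|\tau|<1$, $\tilde S_{N,4}(\tau)=\frac{|\tau|}2\big(1+\frac12(\psi(N+\frac12)-\psi(-N+|\tau|N+\frac12))\big)$ for $1<|\tau|<2-1/N$, $\tilde S_{N,4}(\tau)=1$ for $|\tau|\ge2-1/N$. These are $\frac{2\pi}NS_{N,\beta}(\tau N)$ for the structure function $S_{N,\beta}$ of the circular $\beta$ ensemble. The expansion coefficients $\tilde S_{l,\infty,\beta}$ are defined by the large-$N$ asymptotic expansion at fixed $\tau$, which contains only even powers of $1/N$. *)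

From Stdlib Require Import Reals.
From Coquelicot Require Import Coquelicot.
Open Scope R_scope.

Definition digamma (x : R) : R :=
  real (Lim_seq (fun n : nat => ln (INR n) - sum_f_R0 (fun k => / (x + INR k)) n)).

Definition Stilde (beta : nat) (N tau : R) : R :=
  let t := Rabs tau in
  match beta with
  | 1%nat =>
      if Rlt_dec t 1 then
        2 * t - t * (digamma (t * N + (N + 1) / 2) - digamma ((N + 1) / 2))
      else
        2 - t * (digamma (t * N + (N + 1) / 2) - digamma (t * N + (1 - N) / 2))
  | 4%nat =>
      if Rlt_dec t 1 then
        t / 2 * (1 + / 2 * (digamma (N + / 2) - digamma (N - t * N + / 2)))
      else if Rlt_dec t (2 - / N) then
        t / 2 * (1 + / 2 * (digamma (N + / 2) - digamma (- N + t * N + / 2)))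
      else 1
  | _ => 0
  end.

Definition S0 (beta : nat) (tau : R) : R :=
  real (Lim_seq (fun n : nat => Stilde beta (INR n) tau)).

Definition cbeta (beta : nat) : R := if Nat.eqb beta 1 then - / 6 else - / 24.
Definition dbeta (beta : nat) : R := if Nat.eqb beta 1 then 7 / 360 else 7 / 5760.

Definition S1pred (beta : nat) (tau : R) : R :=
  cbeta beta * tau ^ 2 * Derive_n (S0 beta) 2 tau.

Definition S2pred (beta : nat) (tau : R) : R :=
  dbeta beta * (tau ^ 4 * Derive_n (S0 beta) 4 tau
                + 8 * tau ^ 3 * Derive_n (S0 beta) 3 tau
                + 12 * tau ^ 2 * Derive_n (S0 beta) 2 tau).

From Stdlib Require Import Reals Lra Psatz Lia.
From Coquelicot Require Import Coquelicot.
Open Scope R_scope.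

(* On each of the intervals cut out by tau = 1 (and tau = 2 for beta = 4), S_N(tau) is, for large N,
   of the form u + v (psi(a N + 1/2) - psi(b N + 1/2)) with u, v, a, b affine in tau.  The
   approximation A(x) = ln x + 1/(24 x^2) - 7/(960 x^4) satisfies the recurrence
   psi(x + 3/2) - psi(x + 1/2) = 1/(x + 1/2) up to O(x^-6), so summing the defects gives
   psi(x + 1/2) = A(x) + O(x^-5).  Hence S_N = S0 + N^-2 S1 + N^-4 S2 + O(N^-5), where
   S0 = u + v (ln a - ln b) and S1, S2 are explicit; comparing them with the derivatives of S0
   is then a rational identity on each interval. *)

Definition psi_approx (x : R) : R := ln x + / (24 * x ^ 2) - 7 / (960 * x ^ 4).

Definition psi_step_defect (y : R) : R := psi_approx (y + 1) - psi_approx y - / (y + / 2).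

(* The rational terms cancel the Taylor series of [ln ((1+u)/(1-u)) - 2 u] through order [u^5]. *)
Definition log_ratio_defect (u : R) : R :=
  ln (1 + u) - ln (1 - u) - 2 * u - 2 / 3 * u ^ 3 / (1 - u ^ 2) ^ 2
  + 14 / 15 * u ^ 5 * (1 + u ^ 2) / (1 - u ^ 2) ^ 4.

Definition log_ratio_defect_slope (u : R) : R :=
  u ^ 6 * (62 / 3 - 116 / 15 * u ^ 2 + 2 * u ^ 4) / (1 - u ^ 2) ^ 5.

Lemma log_ratio_defect_derive (u : R) : -1 < u < 1 ->
  is_derive log_ratio_defect u (log_ratio_defect_slope u).
Proof.
  intros [Hl Hr]; unfold log_ratio_defect_slope.
  assert (Hw : 0 < 1 - u ^ 2) by nra.
  unfold log_ratio_defect; auto_derive.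
  - assert (0 < 1 + - (u * (u * 1))) by nra.
    repeat split; try lra; apply Rgt_not_eq; repeat apply Rmult_lt_0_compat; lra.
  - field; repeat split; try lra; nra.
Qed.

Lemma log_ratio_defect_slope_bounds (c : R) : 0 <= c <= / 3 ->
  0 <= log_ratio_defect_slope c <= 48 * c ^ 6.
Proof.
  intros Hc; unfold log_ratio_defect_slope.
  set (z := c ^ 2).
  assert (Hz : 0 <= z <= / 9) by (unfold z; split; nra).
  replace (c ^ 4) with (z * z) by (unfold z; ring).
  assert (Hp : 0 < 62 / 3 - 116 / 15 * z + 2 * (z * z) <= 21) by (split; nra).
  assert (Hw5 : 1 - 5 * z <= (1 - z) ^ 5).
  { replace ((1 - z) ^ 5) with (1 - 5 * z + z * z * (10 - 10 * z + 5 * z * z - z * z * z))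
      by ring.
    assert (0 <= z * z) by nra. assert (z * z * z <= z * z) by nra. nra. }
  assert (H6 : 0 <= c ^ 6) by (apply pow_le; lra).
  assert (Hd : 0 < (1 - z) ^ 5) by (apply pow_lt; lra).
  split.
  - apply Rmult_le_pos; [apply Rmult_le_pos; lra | left; apply Rinv_0_lt_compat; lra].
  - apply Rmult_le_reg_r with ((1 - z) ^ 5); [lra |].
    unfold Rdiv; rewrite Rmult_assoc, Rinv_l by lra. nra.
Qed.

Lemma log_ratio_defect_bounds (u : R) : 0 <= u <= / 3 -> 0 <= log_ratio_defect u <= 16 * u ^ 6.
Proof.
  intros Hu.
  assert (Hd : forall x, 0 <= x <= u -> is_derive log_ratio_defect x (log_ratio_defect_slope x)).
  { intros x Hx; apply log_ratio_defect_derive; lra. }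
  destruct (MVT_gen log_ratio_defect 0 u log_ratio_defect_slope) as [c [Hc Hmvt]].
  - intros x; rewrite Rmin_left, Rmax_right by lra; intros Hx; apply Hd; lra.
  - intros x; rewrite Rmin_left, Rmax_right by lra; intros Hx.
    apply continuity_pt_filterlim, (ex_derive_continuous (K := R_AbsRing) (V := R_NormedModule)).
    eexists; apply Hd; exact Hx.
  - rewrite Rmin_left, Rmax_right in Hc by lra.
    assert (H0 : log_ratio_defect 0 = 0).
    { unfold log_ratio_defect; rewrite Rplus_0_r, Rminus_0_r, ln_1; field. }
    rewrite H0, Rminus_0_r, Rminus_0_r in Hmvt.
    destruct (log_ratio_defect_slope_bounds c) as [Hs1 Hs2]; [lra |].
    assert (c ^ 6 <= u ^ 6) by (apply pow_incr; lra).
    assert (0 <= u ^ 6) by (apply pow_le; lra).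
    rewrite Hmvt; split; [apply Rmult_le_pos; lra | nra].
Qed.

Lemma psi_step_defect_eq (y : R) : 0 < y -> psi_step_defect y = log_ratio_defect (/ (2 * y + 1)).
Proof.
  intros Hy; unfold psi_step_defect, psi_approx, log_ratio_defect.
  replace (1 + / (2 * y + 1)) with (2 * (y + 1) / (2 * y + 1)) by (field; lra).
  replace (1 - / (2 * y + 1)) with (2 * y / (2 * y + 1)) by (field; lra).
  rewrite !ln_div, !ln_mult by lra.
  field; repeat split; try lra; nra.
Qed.

Lemma psi_step_defect_bounds (y : R) : 1 <= y -> 0 <= psi_step_defect y <= / y ^ 6.
Proof.
  intros Hy; rewrite psi_step_defect_eq by lra.
  assert (Hu : 0 < / (2 * y + 1) <= / 3).
  { split; [apply Rinv_0_lt_compat | apply Rinv_le_contravar]; lra. }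
  destruct (log_ratio_defect_bounds (/ (2 * y + 1))) as [Hl Hr]; [lra |].
  assert (H6 : (/ (2 * y + 1)) ^ 6 <= / 64 * / y ^ 6).
  { rewrite pow_inv, <- Rinv_mult.
    apply Rinv_le_contravar; [apply Rmult_lt_0_compat; [lra | apply pow_lt; lra] |].
    replace (64 * y ^ 6) with ((2 * y) ^ 6) by ring; apply pow_incr; lra. }
  assert (0 < / y ^ 6) by (apply Rinv_0_lt_compat, pow_lt; lra).
  lra.
Qed.

Lemma sum_inv_half_shift_telescope (x : R) (n : nat) :
  sum_f_R0 (fun k => / (x + / 2 + INR k)) n =
  psi_approx (x + INR n + 1) - psi_approx x - sum_f_R0 (fun k => psi_step_defect (x + INR k)) n.
Proof.
  induction n as [|n IH].
  - simpl; unfold psi_step_defect; rewrite !Rplus_0_r; ring.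
  - rewrite !tech5, IH, S_INR; unfold psi_step_defect.
    replace (x + / 2 + (INR n + 1)) with (x + INR n + 1 + / 2) by ring.
    replace (x + (INR n + 1)) with (x + INR n + 1) by ring.
    ring.
Qed.

Lemma inv_pow6_le_telescoping (x y : R) : 2 <= x -> x <= y ->
  / y ^ 6 <= / x ^ 4 * (/ (y - 1) - / y).
Proof.
  intros Hx Hy.
  replace (/ (y - 1) - / y) with (/ ((y - 1) * y)) by (field; lra).
  rewrite <- Rinv_mult.
  apply Rinv_le_contravar; [apply Rmult_lt_0_compat; [apply pow_lt | ]; nra |].
  assert (x ^ 4 <= y ^ 4) by (apply pow_incr; lra).
  replace (y ^ 6) with (y ^ 4 * y ^ 2) by ring.
  apply Rmult_le_compat; [apply pow_le | | |]; nra.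
Qed.

Lemma sum_inv_pow6_le (x : R) (n : nat) : 2 <= x ->
  sum_f_R0 (fun k => / (x + INR k) ^ 6) n <= 2 / x ^ 5.
Proof.
  intros Hx.
  assert (Htel : forall m, sum_f_R0 (fun k => / (x + INR k) ^ 6) m
                           <= / x ^ 4 * (/ (x - 1) - / (x + INR m))).
  { induction m as [|m IH].
    - simpl; rewrite Rplus_0_r; apply inv_pow6_le_telescoping; lra.
    - rewrite tech5, S_INR.
      pose proof (pos_INR m).
      assert (/ (x + (INR m + 1)) ^ 6 <= / x ^ 4 * (/ (x + INR m) - / (x + (INR m + 1)))).
      { replace (x + INR m) with (x + (INR m + 1) - 1) at 1 by ring.
        apply inv_pow6_le_telescoping; lra. }
      lra. }
  eapply Rle_trans; [apply Htel |].
  pose proof (pos_INR n).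
  assert (0 < / (x + INR n)) by (apply Rinv_0_lt_compat; lra).
  assert (/ (x - 1) <= 2 / x)
    by (apply Rmult_le_reg_r with (x * (x - 1)); [nra |]; field_simplify; lra).
  assert (0 < / x ^ 4) by (apply Rinv_0_lt_compat, pow_lt; lra).
  replace (2 / x ^ 5) with (/ x ^ 4 * (2 / x)) by (field; lra).
  apply Rmult_le_compat_l; lra.
Qed.

Lemma ln_INR_sub_psi_approx_bound (x : R) (n : nat) : 0 <= x -> (1 <= n)%nat ->
  Rabs (ln (INR n) - psi_approx (x + INR n + 1)) <= (x + 3) / INR n.
Proof.
  intros Hx Hn.
  apply le_INR in Hn; simpl in Hn.
  set (z := x + INR n + 1).
  assert (Hz : INR n + 1 <= z) by (unfold z; lra).
  assert (Hlog : 0 <= ln z - ln (INR n) <= (x + 1) / INR n).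
  { rewrite <- ln_div by lra.
    replace (z / INR n) with (1 + (x + 1) / INR n) by (unfold z; field; lra).
    assert (0 <= (x + 1) / INR n) by (apply Rdiv_le_0_compat; lra).
    split; [rewrite <- ln_1; apply ln_le; lra |].
    rewrite <- (ln_exp ((x + 1) / INR n)) at 2; apply ln_le; [lra |].
    pose proof (exp_ineq1_le ((x + 1) / INR n)); lra. }
  assert (Hz2 : 0 <= / (24 * z ^ 2) <= / INR n).
  { split; [left; apply Rinv_0_lt_compat, Rmult_lt_0_compat; [| apply pow_lt]; lra |].
    apply Rinv_le_contravar; nra. }
  assert (Hz4 : 0 <= 7 / (960 * z ^ 4) <= / INR n).
  { assert (1 <= z ^ 2) by nra.
    assert (Hi : 0 < / z ^ 2 <= 1).
    { split; [apply Rinv_0_lt_compat; lra | rewrite <- Rinv_1; apply Rinv_le_contravar; lra]. }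
    replace (7 / (960 * z ^ 4)) with (7 / 40 * / z ^ 2 * / (24 * z ^ 2)) by (field; lra).
    split; nra. }
  unfold psi_approx; fold z.
  replace ((x + 3) / INR n) with ((x + 1) / INR n + / INR n + / INR n) by (field; lra).
  apply Rabs_le; lra.
Qed.

Lemma is_lim_seq_div_INR (C : R) : is_lim_seq (fun n => C / INR n) 0.
Proof.
  replace (Finite 0) with (Rbar_mult C (Rbar_inv p_infty)) by (simpl; f_equal; ring).
  apply is_lim_seq_scal_l, is_lim_seq_inv; [apply is_lim_seq_INR | discriminate].
Qed.

Lemma is_lim_seq_of_inv_bound (w : nat -> R) (l C : R) :
  eventually (fun n => Rabs (w n - l) <= C / INR n) -> is_lim_seq w l.
Proof.
  intros Hw.
  apply is_lim_seq_le_le_loc with (fun n => l + - C / INR n) (fun n => l + C / INR n).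
  - revert Hw; apply filter_imp; intros n Hn.
    apply Rabs_le_between in Hn; unfold Rdiv in *; lra.
  - rewrite <- (Rplus_0_r l) at 1; apply is_lim_seq_plus' with (u := fun _ => l);
      [apply is_lim_seq_const | apply is_lim_seq_div_INR].
  - rewrite <- (Rplus_0_r l) at 1; apply is_lim_seq_plus' with (u := fun _ => l);
      [apply is_lim_seq_const | apply is_lim_seq_div_INR].
Qed.

Lemma eventually_INR_gt (M : R) : eventually (fun n => M < INR n).
Proof. apply is_lim_seq_INR; exists M; auto. Qed.

Lemma digamma_half_shift_expansion (x : R) : 2 <= x ->
  exists T, 0 <= T <= 2 / x ^ 5 /\ digamma (x + / 2) = psi_approx x + T.
Proof.
  intros Hx.
  set (T := fun n => sum_f_R0 (fun k => psi_step_defect (x + INR k)) n).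
  assert (Hdefect : forall k, 0 <= psi_step_defect (x + INR k) <= / (x + INR k) ^ 6).
  { intros k; apply psi_step_defect_bounds; pose proof (pos_INR k); lra. }
  assert (Hincr : forall n, T n <= T (S n)).
  { intros n; unfold T; rewrite tech5; pose proof (Hdefect (S n)); lra. }
  assert (Hpos : forall n, 0 <= T n).
  { induction n as [|n IH]; [apply Hdefect | pose proof (Hincr n); lra]. }
  assert (Hbound : forall n, T n <= 2 / x ^ 5).
  { intros n; eapply Rle_trans; [| apply (sum_inv_pow6_le x n Hx)].
    apply sum_Rle; intros k _; apply Hdefect. }
  destruct (ex_finite_lim_seq_incr T _ Hincr Hbound) as [T0 HT0].
  exists T0; split.
  - split; [apply (is_lim_seq_le (fun _ => 0) T 0 T0)
           | apply (is_lim_seq_le T (fun _ => 2 / x ^ 5) T0 (2 / x ^ 5))];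
      auto using is_lim_seq_const.
  - assert (Hlim : is_lim_seq (fun n => ln (INR n) - sum_f_R0 (fun k => / (x + / 2 + INR k)) n)
                              (0 + psi_approx x + T0)).
    { apply is_lim_seq_ext with
        (fun n => (ln (INR n) - psi_approx (x + INR n + 1)) + psi_approx x + T n).
      { intros n; rewrite sum_inv_half_shift_telescope; unfold T; ring. }
      apply is_lim_seq_plus'; [apply is_lim_seq_plus'; [| apply is_lim_seq_const] | exact HT0].
      apply is_lim_seq_of_inv_bound with (x + 3); exists 1%nat; intros n Hn.
      rewrite Rminus_0_r; apply ln_INR_sub_psi_approx_bound; [lra | exact Hn]. }
    unfold digamma; rewrite (is_lim_seq_unique _ _ Hlim); simpl; ring.
Qed.

Lemma Rabs_pow_mul_le (N E K : R) (k : nat) : 1 <= N -> (k <= 4)%nat ->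
  Rabs E <= K / N ^ 5 -> Rabs (N ^ k * E) <= K / N.
Proof.
  intros HN Hk HE.
  assert (HNk : 0 < N ^ k <= N ^ 4) by (split; [apply pow_lt; lra | apply Rle_pow; auto]).
  rewrite Rabs_mult, (Rabs_pos_eq (N ^ k)) by lra.
  replace (K / N) with (N ^ 4 * (K / N ^ 5)) by (field; lra).
  pose proof (Rabs_pos E); nra.
Qed.

Lemma Rabs_div_pow_le (c N : R) (j : nat) : 1 <= N -> Rabs (c / N ^ S j) <= Rabs c / N.
Proof.
  intros HN.
  assert (HNj : N <= N ^ S j) by (rewrite <- (pow_1 N) at 1; apply Rle_pow; [lra | lia]).
  unfold Rdiv; rewrite Rabs_mult, Rabs_inv, (Rabs_pos_eq (N ^ S j)) by lra.
  apply Rmult_le_compat_l; [apply Rabs_pos | apply Rinv_le_contravar; lra].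
Qed.

Lemma is_lim_seq_two_term_expansion (f : nat -> R) (s0 s1 s2 K : R) :
  eventually (fun n => Rabs (f n - (s0 + s1 / INR n ^ 2 + s2 / INR n ^ 4)) <= K / INR n ^ 5) ->
  is_lim_seq f s0 /\
  is_lim_seq (fun n => INR n ^ 2 * (f n - s0)) s1 /\
  is_lim_seq (fun n => INR n ^ 4 * (f n - s0 - s1 / INR n ^ 2)) s2.
Proof.
  intros Hf.
  assert (Hev := filter_and _ _ (eventually_INR_gt 1) Hf).
  split; [| split];
    [apply is_lim_seq_of_inv_bound with (Rabs s1 + Rabs s2 + K)
    | apply is_lim_seq_of_inv_bound with (Rabs s2 + K)
    | apply is_lim_seq_of_inv_bound with K];
    revert Hev; apply filter_imp; intros n [Hn HE];
    set (N := INR n) in *; set (E := f n - (s0 + s1 / N ^ 2 + s2 / N ^ 4)) in HE;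
    pose proof (Rabs_pow_mul_le N E K 0 ltac:(lra) ltac:(lia) HE) as H0;
    simpl in H0; rewrite Rmult_1_l in H0.
  - replace (f n - s0) with (E + s1 / N ^ 2 + s2 / N ^ 4) by (unfold E; ring).
    pose proof (Rabs_div_pow_le s1 N 1 ltac:(lra)).
    pose proof (Rabs_div_pow_le s2 N 3 ltac:(lra)).
    pose proof (Rabs_triang (E + s1 / N ^ 2) (s2 / N ^ 4)).
    pose proof (Rabs_triang E (s1 / N ^ 2)).
    replace ((Rabs s1 + Rabs s2 + K) / N) with (Rabs s1 / N + Rabs s2 / N + K / N) by (field; lra).
    lra.
  - replace (N ^ 2 * (f n - s0) - s1) with (N ^ 2 * E + s2 / N ^ 2) by (unfold E; field; lra).
    pose proof (Rabs_pow_mul_le N E K 2 ltac:(lra) ltac:(lia) HE).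
    pose proof (Rabs_div_pow_le s2 N 1 ltac:(lra)).
    pose proof (Rabs_triang (N ^ 2 * E) (s2 / N ^ 2)).
    replace ((Rabs s2 + K) / N) with (Rabs s2 / N + K / N) by (field; lra).
    lra.
  - replace (N ^ 4 * (f n - s0 - s1 / N ^ 2) - s2) with (N ^ 4 * E) by (unfold E; field; lra).
    apply Rabs_pow_mul_le; [lra | lia | exact HE].
Qed.

Lemma digamma_difference_expansion (f : nat -> R) (u v a b : R) : 0 < a -> 0 < b ->
  eventually (fun n => f n = u + v * (digamma (a * INR n + / 2) - digamma (b * INR n + / 2))) ->
  let s0 := u + v * (ln a - ln b) in
  let s1 := v / 24 * (/ a ^ 2 - / b ^ 2) in
  let s2 := - 7 * v / 960 * (/ a ^ 4 - / b ^ 4) in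
  is_lim_seq f s0 /\
  is_lim_seq (fun n => INR n ^ 2 * (f n - s0)) s1 /\
  is_lim_seq (fun n => INR n ^ 4 * (f n - s0 - s1 / INR n ^ 2)) s2.
Proof.
  intros Ha Hb Hf s0 s1 s2.
  apply is_lim_seq_two_term_expansion with (Rabs v * (2 / a ^ 5 + 2 / b ^ 5)).
  assert (Hab : 0 < 2 / a /\ 0 < 2 / b) by (split; apply Rdiv_lt_0_compat; lra).
  assert (Hev := filter_and _ _ (eventually_INR_gt (2 / a + 2 / b)) Hf).
  revert Hev; apply filter_imp; intros n [Hn ->].
  set (N := INR n) in *.
  assert (HN : 0 < N) by lra.
  assert (HaN : 2 <= a * N) by (apply Rmult_le_reg_l with (/ a);
    [apply Rinv_0_lt_compat; lra | rewrite <- Rmult_assoc, Rinv_l by lra; unfold Rdiv in *; lra]).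
  assert (HbN : 2 <= b * N) by (apply Rmult_le_reg_l with (/ b);
    [apply Rinv_0_lt_compat; lra | rewrite <- Rmult_assoc, Rinv_l by lra; unfold Rdiv in *; lra]).
  destruct (digamma_half_shift_expansion _ HaN) as [Ta [HTa ->]].
  destruct (digamma_half_shift_expansion _ HbN) as [Tb [HTb ->]].
  replace (u + v * (psi_approx (a * N) + Ta - (psi_approx (b * N) + Tb))
           - (s0 + s1 / N ^ 2 + s2 / N ^ 4)) with (v * (Ta - Tb))
    by (unfold psi_approx, s0, s1, s2; rewrite !ln_mult by lra; field; repeat split; lra).
  rewrite Rabs_mult; unfold Rdiv at 1; rewrite Rmult_assoc.
  apply Rmult_le_compat_l; [apply Rabs_pos |].
  rewrite !Rpow_mult_distr in HTa, HTb.
  replace ((2 / a ^ 5 + 2 / b ^ 5) * / N ^ 5) with (2 / (a ^ 5 * N ^ 5) + 2 / (b ^ 5 * N ^ 5))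
    by (field; repeat split; lra).
  apply Rabs_le; lra.
Qed.

Lemma locally_in_open_interval (l h t : R) : l < t < h -> locally t (fun s => l < s < h).
Proof. intros Ht; apply (open_and _ _ (open_gt l) (open_lt h)); exact Ht. Qed.

Section DerivativeChain.

Variables (D : nat -> R -> R) (n : nat) (l h : R).
Hypothesis D_derive : forall k s, (k < n)%nat -> l < s < h -> is_derive (D k) s (D (S k) s).

Lemma Derive_n_chain k s : (k <= n)%nat -> l < s < h -> Derive_n (D 0) k s = D k s.
Proof.
  revert s; induction k as [|k IH]; intros s Hk Hs; [reflexivity |].
  assert (Hloc : locally s (fun y => D k y = Derive_n (D 0) k y)).
  { apply (filter_imp (fun y => l < y < h)); [intros y Hy; symmetry; apply IH; [lia | exact Hy] |].
    now apply locally_in_open_interval. }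
  simpl; rewrite <- (Derive_ext_loc _ _ _ Hloc).
  apply is_derive_unique, D_derive; [lia | exact Hs].
Qed.

Lemma ex_derive_n_chain k s : (k <= n)%nat -> l < s < h -> ex_derive_n (D 0) k s.
Proof.
  destruct k as [|k]; intros Hk Hs; [exact I |].
  apply ex_derive_ext_loc with (D k).
  - apply (filter_imp (fun y => l < y < h));
      [intros y Hy; symmetry; apply Derive_n_chain; [lia | exact Hy] |].
    now apply locally_in_open_interval.
  - eexists; apply D_derive; [lia | exact Hs].
Qed.

End DerivativeChain.

Definition xlog_affine_deriv (q r : R) (k : nat) (t : R) : R :=
  let a := q * t + r in
  match k with
  | 0 => t * ln a
  | 1 => ln a + q * t / a
  | 2 => q / a + q * r / a ^ 2
  | 3 => - q ^ 2 / a ^ 2 - 2 * q ^ 2 * r / a ^ 3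
  | _ => 2 * q ^ 3 / a ^ 3 + 6 * q ^ 3 * r / a ^ 4
  end.

Ltac pos_denominators :=
  repeat split; try lra;
  try (apply Rgt_not_eq; repeat apply Rmult_lt_0_compat; try apply pow_lt; lra).

Lemma xlog_affine_deriv_is_derive (q r : R) (k : nat) (t : R) : (k < 4)%nat -> 0 < q * t + r ->
  is_derive (xlog_affine_deriv q r k) t (xlog_affine_deriv q r (S k) t).
Proof.
  intros Hk Ha.
  destruct k as [|[|[|[|k]]]]; [| | | | lia]; unfold xlog_affine_deriv;
    auto_derive; pos_denominators; field; pos_denominators.
Qed.

Definition S0_model (u0 u1 c q1 r1 q2 r2 : R) (k : nat) (t : R) : R :=
  match k with 0 => u0 + u1 * t | 1 => u1 | _ => 0 end
  + c * (xlog_affine_deriv q1 r1 k t - xlog_affine_deriv q2 r2 k t).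

Lemma S0_model_is_derive (u0 u1 c q1 r1 q2 r2 : R) (k : nat) (t : R) :
  (k < 4)%nat -> 0 < q1 * t + r1 -> 0 < q2 * t + r2 ->
  is_derive (S0_model u0 u1 c q1 r1 q2 r2 k) t (S0_model u0 u1 c q1 r1 q2 r2 (S k) t).
Proof.
  intros Hk H1 H2; unfold S0_model.
  apply (is_derive_plus (V := R_NormedModule)).
  - destruct k as [|[|k]]; auto_derive; auto; ring.
  - apply is_derive_scal, (is_derive_minus (V := R_NormedModule));
      apply xlog_affine_deriv_is_derive; assumption.
Qed.

Definition has_predicted_expansion (beta : nat) (tau : R) : Prop :=
  (forall k : nat, (k <= 4)%nat -> ex_derive_n (S0 beta) k tau) /\
  is_lim_seq (fun n : nat => INR n ^ 2 * (Stilde beta (INR n) tau - S0 beta tau))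
             (Finite (S1pred beta tau)) /\
  is_lim_seq (fun n : nat => INR n ^ 4 *
                 (Stilde beta (INR n) tau - S0 beta tau - S1pred beta tau / INR n ^ 2))
             (Finite (S2pred beta tau)).

Lemma has_predicted_expansion_on_interval (beta : nat) (l h tau u0 u1 c q1 r1 q2 r2 : R) :
  l < tau < h ->
  (forall t, l < t < h -> 0 < q1 * t + r1 /\ 0 < q2 * t + r2) ->
  (forall t, l < t < h -> eventually (fun n => Stilde beta (INR n) t =
     u0 + u1 * t + c * t * (digamma ((q1 * t + r1) * INR n + / 2)
                            - digamma ((q2 * t + r2) * INR n + / 2)))) ->
  let M := S0_model u0 u1 c q1 r1 q2 r2 in
  let a := q1 * tau + r1 in
  let b := q2 * tau + r2 in
  cbeta beta * tau ^ 2 * M 2%nat tau = c * tau / 24 * (/ a ^ 2 - / b ^ 2) ->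
  dbeta beta * (tau ^ 4 * M 4%nat tau + 8 * tau ^ 3 * M 3%nat tau + 12 * tau ^ 2 * M 2%nat tau)
    = - 7 * (c * tau) / 960 * (/ a ^ 4 - / b ^ 4) ->
  has_predicted_expansion beta tau.
Proof.
  intros Htau Hpos Hrep M a b E1 E2.
  assert (HS0 : forall t, l < t < h -> S0 beta t = M 0%nat t).
  { intros t Ht; destruct (Hpos t Ht) as [Ha Hb].
    destruct (digamma_difference_expansion _ _ _ _ _ Ha Hb (Hrep t Ht)) as [L0 _].
    unfold S0; rewrite (is_lim_seq_unique _ _ L0); simpl.
    unfold M, S0_model, xlog_affine_deriv; ring. }
  assert (Hchain : forall k s, (k < 4)%nat -> l < s < h -> is_derive (M k) s (M (S k) s)).
  { intros k s Hk Hs; apply S0_model_is_derive; [exact Hk | apply Hpos..]; exact Hs. }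
  assert (Hloc : locally tau (fun t => M 0%nat t = S0 beta t)).
  { apply (filter_imp (fun t => l < t < h)); [intros t Ht; symmetry; auto |].
    now apply locally_in_open_interval. }
  assert (HD : forall k, (k <= 4)%nat -> Derive_n (S0 beta) k tau = M k tau).
  { intros k Hk; rewrite <- (Derive_n_ext_loc _ _ k _ Hloc).
    exact (Derive_n_chain M 4 l h Hchain k tau Hk Htau). }
  destruct (Hpos tau Htau) as [Ha Hb].
  destruct (digamma_difference_expansion _ _ _ _ _ Ha Hb (Hrep tau Htau)) as [_ [L1 L2]].
  fold a b in L1, L2.
  assert (ES0 : S0 beta tau = u0 + u1 * tau + c * tau * (ln a - ln b))
    by (rewrite HS0 by exact Htau; unfold M, S0_model, xlog_affine_deriv; fold a b; ring).
  assert (ES1 : S1pred beta tau = c * tau / 24 * (/ a ^ 2 - / b ^ 2))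
    by (unfold S1pred; rewrite HD by lia; exact E1).
  assert (ES2 : S2pred beta tau = - 7 * (c * tau) / 960 * (/ a ^ 4 - / b ^ 4))
    by (unfold S2pred; rewrite !HD by lia; exact E2).
  split; [| split].
  - intros k Hk; apply (ex_derive_n_ext_loc _ _ k _ Hloc).
    exact (ex_derive_n_chain M 4 l h Hchain k tau Hk Htau).
  - rewrite ES0, ES1; exact L1.
  - rewrite ES0, ES1, ES2; exact L2.
Qed.

Ltac coefficient_identity :=
  unfold S0_model, xlog_affine_deriv, cbeta, dbeta; simpl Nat.eqb; cbv iota;
  field; pos_denominators.

Lemma has_predicted_expansion_beta1_below1 (tau : R) : 0 < tau < 1 -> has_predicted_expansion 1 tau.
Proof.
  intros Htau.
  apply (has_predicted_expansion_on_interval 1 0 1 tau 0 2 (-1) 1 (/ 2) 0 (/ 2));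
    [lra | intros t Ht; lra | | coefficient_identity | coefficient_identity].
  intros t Ht; exists 0%nat; intros n _; unfold Stilde; cbv zeta.
  rewrite Rabs_pos_eq by lra; destruct (Rlt_dec t 1) as [_ | ]; [| lra].
  replace (t * INR n + (INR n + 1) / 2) with ((1 * t + / 2) * INR n + / 2) by field.
  replace ((INR n + 1) / 2) with ((0 * t + / 2) * INR n + / 2) by field.
  ring.
Qed.

Lemma has_predicted_expansion_beta1_above1 (tau : R) : 1 < tau -> has_predicted_expansion 1 tau.
Proof.
  intros Htau.
  apply (has_predicted_expansion_on_interval 1 1 (tau + 1) tau 2 0 (-1) 1 (/ 2) 1 (- / 2));
    [lra | intros t Ht; lra | | coefficient_identity | coefficient_identity].
  intros t Ht; exists 0%nat; intros n _; unfold Stilde; cbv zeta.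
  rewrite Rabs_pos_eq by lra; destruct (Rlt_dec t 1); [lra |].
  replace (t * INR n + (INR n + 1) / 2) with ((1 * t + / 2) * INR n + / 2) by field.
  replace (t * INR n + (1 - INR n) / 2) with ((1 * t + - / 2) * INR n + / 2) by field.
  ring.
Qed.

Lemma has_predicted_expansion_beta4_below1 (tau : R) : 0 < tau < 1 -> has_predicted_expansion 4 tau.
Proof.
  intros Htau.
  apply (has_predicted_expansion_on_interval 4 0 1 tau 0 (/ 2) (/ 4) 0 1 (-1) 1);
    [lra | intros t Ht; lra | | coefficient_identity | coefficient_identity].
  intros t Ht; exists 0%nat; intros n _; unfold Stilde; cbv zeta.
  rewrite Rabs_pos_eq by lra; destruct (Rlt_dec t 1) as [_ | ]; [| lra].
  replace (INR n + / 2) with ((0 * t + 1) * INR n + / 2) by ring.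
  replace (INR n - t * INR n + / 2) with ((-1 * t + 1) * INR n + / 2) by ring.
  field.
Qed.

Lemma has_predicted_expansion_beta4_between1and2 (tau : R) : 1 < tau < 2 -> has_predicted_expansion 4 tau.
Proof.
  intros Htau.
  apply (has_predicted_expansion_on_interval 4 1 2 tau 0 (/ 2) (/ 4) 0 1 1 (-1));
    [lra | intros t Ht; lra | | coefficient_identity | coefficient_identity].
  intros t Ht.
  apply (filter_imp (fun n => / (2 - t) < INR n)); [| apply eventually_INR_gt].
  intros n Hn.
  assert (Hedge : t < 2 - / INR n).
  { assert (0 < / (2 - t)) by (apply Rinv_0_lt_compat; lra).
    assert (/ INR n < / / (2 - t)) by (apply Rinv_lt_contravar; nra).
    rewrite Rinv_inv in *; lra. }
  unfold Stilde; cbv zeta.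
  rewrite Rabs_pos_eq by lra; destruct (Rlt_dec t 1); [lra |].
  destruct (Rlt_dec t (2 - / INR n)) as [_ | ]; [| lra].
  replace (INR n + / 2) with ((0 * t + 1) * INR n + / 2) by ring.
  replace (- INR n + t * INR n + / 2) with ((1 * t + -1) * INR n + / 2) by ring.
  field.
Qed.

Lemma has_predicted_expansion_beta4_above2 (tau : R) : 2 < tau -> has_predicted_expansion 4 tau.
Proof.
  intros Htau.
  apply (has_predicted_expansion_on_interval 4 2 (tau + 1) tau 1 0 0 0 1 0 1);
    [lra | intros t Ht; lra | | coefficient_identity | coefficient_identity].
  intros t Ht.
  apply (filter_imp (fun n => 0 < INR n)); [| apply eventually_INR_gt].
  intros n Hn.
  assert (0 < / INR n) by (apply Rinv_0_lt_compat; lra).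
  unfold Stilde; cbv zeta.
  rewrite Rabs_pos_eq by lra; destruct (Rlt_dec t 1); [lra |].
  destruct (Rlt_dec t (2 - / INR n)); [lra |].
  ring.
Qed.

Theorem mainTheorem8 (beta : nat) (tau : R) :
  (beta = 1%nat \/ beta = 4%nat) ->
  0 < tau -> tau <> 1 -> (beta = 4%nat -> tau <> 2) ->
  (forall k : nat, (k <= 4)%nat -> ex_derive_n (S0 beta) k tau) /\
  is_lim_seq (fun n : nat => INR n ^ 2 * (Stilde beta (INR n) tau - S0 beta tau))
             (Finite (S1pred beta tau)) /\
  is_lim_seq (fun n : nat => INR n ^ 4 *
                 (Stilde beta (INR n) tau - S0 beta tau - S1pred beta tau / INR n ^ 2))
             (Finite (S2pred beta tau)).
Proof.
  intros [-> | ->] Hpos H1 H2.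
  - destruct (Rlt_or_le tau 1).
    + apply has_predicted_expansion_beta1_below1; lra.
    + apply has_predicted_expansion_beta1_above1; lra.
  - specialize (H2 eq_refl).
    destruct (Rlt_or_le tau 1); [apply has_predicted_expansion_beta4_below1; lra |].
    destruct (Rlt_or_le tau 2).
    + apply has_predicted_expansion_beta4_between1and2; lra.
    + apply has_predicted_expansion_beta4_above2; lra.
Qed.
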